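(* Let $f(x)=\frac1n\sum_{i=1}^n f_i(x)$ where each $f_i:\mathbb{R}^d\to\mathbb{R}$ has Lipschitz continuous gradient with constant $L_{f,i}$, and let $M=\max_i L_{f,i}$ and $r=\frac{2}{1-c_2}$. In the First-Order Stochastic Trust-Region Method described in the context, if at iteration $k$ we have $g_k\neq 0$ and \[ \Delta_k\le\frac{\|g_k\|}{rM}, \] then $\Delta_{k+1}=\min(\nu_2\Delta_k,\bar\Delta)$.
   Context: First-Order Stochastic Trust-Region Method: parameters $\bar\Delta>0$, $\Delta_0\in(0,\bar\Delta)$, $0<c_0\le c_1\le c_2<1$, $\nu_1,\nu_2>1$. At iteration $k$: sample an index $i\in\{1,\dots,n\}$, set $g_k=\nabla f_i(x_k)$; $m_k(p)=g_k^\top p+\frac12\|p\|^2$; $p_k=\arg\min_{\|p\|\le\Delta_k}m_k(p)=-a_kg_k$ with $a_k=1$ if $\|g_k\|\le\Delta_k$ and $a_k=\Delta_k/\|g_k\|$ otherwise; $r_k=\frac{f_i(x_k)-f_i(x_k+p_k)}{m_k(0)-m_k(p_k)}$; $x_{k+1}=x_k+p_k$ if $r_k>c_0$, else $x_{k+1}=x_k$; $\Delta_{k+1}=\Delta_k/\nu_1$ if $r_k<c_1$, $\min(\nu_2\Delta_k,\bar\Delta)$ if $r_k>c_2$, $\Delta_k$ otherwise. *)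

From HB Require Import structures.
From mathcomp Require Import all_boot all_order all_algebra.
From mathcomp Require Import all_classical all_reals all_analysis.
Set Implicit Arguments. Unset Strict Implicit. Unset Printing Implicit Defensive.
Import Order.TTheory GRing.Theory Num.Theory.
Import numFieldNormedType.Exports.
Local Open Scope ring_scope.

Section TR.
Variables (R : realType) (d : nat).

Definition dotp (u v : 'rV[R]_d) : R := \sum_(j < d) u ord0 j * v ord0 j.
Definition enorm (u : 'rV[R]_d) : R := Num.sqrt (dotp u u).

Definition tr_model (g p : 'rV[R]_d) : R := dotp g p + 2^-1 * enorm p ^+ 2.

Definition tr_alpha (g : 'rV[R]_d) (D : R) : R :=
  if enorm g <= D then 1 else D / enorm g.
Definition tr_step (g : 'rV[R]_d) (D : R) : 'rV[R]_d := - (tr_alpha g D *: g).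

Definition tr_ratio (fi : 'rV[R]_d -> R) (g x : 'rV[R]_d) (D : R) : R :=
  (fi x - fi (x + tr_step g D)) / (tr_model g 0 - tr_model g (tr_step g D)).

Definition tr_update (Dbar c0 c1 c2 nu1 nu2 : R)
    (fi : 'rV[R]_d -> R) (gradi : 'rV[R]_d -> 'rV[R]_d)
    (st : 'rV[R]_d * R) : 'rV[R]_d * R :=
  let: (x, D) := st in
  let g := gradi x in
  let rk := tr_ratio fi g x D in
  let p := tr_step g D in
  (if c0 < rk then x + p else x,
   if rk < c1 then D / nu1
   else if c2 < rk then Num.min (nu2 * D) Dbar else D).

(* the iterates (x_k, Delta_k) for a given realization idx of the sampled
   indices (idx k is the index sampled at iteration k) *)
Fixpoint tr_iter (n : nat) (F : 'I_n -> 'rV[R]_d -> R)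
    (grad : 'I_n -> 'rV[R]_d -> 'rV[R]_d)
    (Dbar c0 c1 c2 nu1 nu2 : R) (idx : nat -> 'I_n)
    (x0 : 'rV[R]_d) (D0 : R) (k : nat) : 'rV[R]_d * R :=
  match k with
  | 0 => (x0, D0)
  | k'.+1 => tr_update Dbar c0 c1 c2 nu1 nu2 (F (idx k')) (grad (idx k'))
               (tr_iter F grad Dbar c0 c1 c2 nu1 nu2 idx x0 D0 k')
  end.

End TR.

(* Write g = grad f_i (x_k), e = |g| and a = a_k, so that p_k = - a g. The model
   predicts the decrease a (1 - a/2) e^2, while the mean value theorem on the
   segment [x_k, x_k + p_k] and the Lipschitz bound on grad f_i guarantee an
   actual decrease of at least a (1 - L_i a) e^2; hence r_k >= 1 - L_i a.
   Since a e <= Delta_k <= e / (r M), we get L_i a <= M a <= 1/r = (1 - c_2)/2,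
   so r_k > c_2 and the radius is enlarged. *)

From HB Require Import structures.
From mathcomp Require Import all_boot all_order all_algebra.
From mathcomp Require Import all_classical all_reals all_analysis.
From mathcomp Require Import ring lra.
Set Implicit Arguments. Unset Strict Implicit. Unset Printing Implicit Defensive.
Import Order.TTheory GRing.Theory Num.Theory.
Import numFieldNormedType.Exports.
Local Open Scope ring_scope.

Section EuclideanGeometry.
Variables (R : realType) (d : nat).
Implicit Types (u v w : 'rV[R]_d) (a : R).

Lemma dotpC u v : dotp u v = dotp v u.
Proof. by apply: eq_bigr => j _; rewrite mulrC. Qed.

Lemma dotpZl a u v : dotp (a *: u) v = a * dotp u v.
Proof. by rewrite /dotp mulr_sumr; apply: eq_bigr => j _; rewrite !mxE mulrA. Qed.

Lemma dotpZr a u v : dotp u (a *: v) = a * dotp u v.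
Proof. by rewrite dotpC dotpZl dotpC. Qed.

Lemma dotpNl u v : dotp (- u) v = - dotp u v.
Proof. by rewrite -scaleN1r dotpZl mulN1r. Qed.

Lemma dotpNr u v : dotp u (- v) = - dotp u v.
Proof. by rewrite dotpC dotpNl dotpC. Qed.

Lemma dotpDl u w v : dotp (u + w) v = dotp u v + dotp w v.
Proof. by rewrite /dotp -big_split; apply: eq_bigr => j _; rewrite !mxE mulrDl. Qed.

Lemma dotp0l v : dotp 0 v = 0.
Proof. by rewrite -(scale0r (0 : 'rV[R]_d)) dotpZl mul0r. Qed.

Lemma dotpp_ge0 u : 0 <= dotp u u.
Proof. by apply: sumr_ge0 => j _; rewrite -expr2 sqr_ge0. Qed.

Lemma dotpp_eq0 u : (dotp u u == 0) = (u == 0).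
Proof.
apply/idP/eqP => [|->]; last by rewrite dotp0l.
rewrite psumr_eq0 => [/allP u0|j _]; last by rewrite -expr2 sqr_ge0.
apply/matrixP => i j; rewrite !mxE (ord1 i).
by have := u0 j (mem_index_enum _); rewrite /= mulf_eq0 orbb => /eqP.
Qed.

Lemma enorm_ge0 u : 0 <= enorm u.
Proof. exact: sqrtr_ge0. Qed.

Lemma enorm_sqr u : enorm u ^+ 2 = dotp u u.
Proof. by rewrite sqr_sqrtr // dotpp_ge0. Qed.

Lemma enorm_eq0 u : (enorm u == 0) = (u == 0).
Proof. by rewrite -sqrf_eq0 enorm_sqr dotpp_eq0. Qed.

Lemma enorm_gt0 u : (0 < enorm u) = (u != 0).
Proof. by rewrite lt_neqAle enorm_ge0 andbT eq_sym enorm_eq0. Qed.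

Lemma enormZ a u : enorm (a *: u) = `|a| * enorm u.
Proof.
by rewrite /enorm dotpZl dotpZr mulrA -expr2 sqrtrM ?sqr_ge0 // sqrtr_sqr.
Qed.

Lemma enormN u : enorm (- u) = enorm u.
Proof. by rewrite /enorm dotpNl dotpNr opprK. Qed.

Lemma dotp_le_enorm u v : dotp u v <= enorm u * enorm v.
Proof.
have [->|u0] := eqVneq u 0; first by rewrite dotp0l mulr_ge0 ?enorm_ge0.
have [->|v0] := eqVneq v 0; first by rewrite dotpC dotp0l mulr_ge0 ?enorm_ge0.
set a := enorm u; set b := enorm v.
have a0 : 0 < a by rewrite enorm_gt0.
have b0 : 0 < b by rewrite enorm_gt0.
(* Sum over the coordinates the inequality [2 a b x y <= b^2 x^2 + a^2 y^2]. *)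
have : 2 * (a * b) * dotp u v <= b ^+ 2 * dotp u u + a ^+ 2 * dotp v v.
  rewrite /dotp !mulr_sumr -big_split /=; apply: ler_sum => j _.
  have := sqr_ge0 (b * u ord0 j - a * v ord0 j); nra.
rewrite -!enorm_sqr -/a -/b; have := mulr_gt0 a0 b0; nra.
Qed.

Lemma dotp_ge_Nenorm u v : - (enorm u * enorm v) <= dotp u v.
Proof. by rewrite lerNl -dotpNl -(enormN u) dotp_le_enorm. Qed.

End EuclideanGeometry.

Section MeanValueAlongSegment.
Variables (R : realType) (V : normedModType R) (f : V -> R).

Lemma is_derive_along_line x p t : differentiable f (x + t *: p) ->
  is_derive t 1 (fun s : R => f (x + s *: p)) ('D_p f (x + t *: p)).
Proof.
move=> /(@diff_derivable _ _ _ _ _ p) fp.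
(* The difference quotients of [s |-> f (x + s p)] at [t] are those of [f] at
   [x + t p] in the direction [p]. *)
have quot : (fun h : R => h^-1 *: (((fun s => f (x + s *: p)) \o shift t) h%:A - f (x + t *: p)))
        = (fun h : R => h^-1 *: ((f \o shift (x + t *: p)) (h *: p) - f (x + t *: p))).
  apply: funext => h /=; congr (_ *: (f _ - _)).
  by rewrite [h%:A]mulr1 scalerDl addrCA.
by split; rewrite /derivable /derive quot.
Qed.

Lemma mean_value_along_segment x p : (forall y, differentiable f y) ->
  exists2 c, 0 < c < 1 & f (x + p) - f x = 'D_p f (x + c *: p).
Proof.
move=> fdiff; have fline s := is_derive_along_line (fdiff (x + s *: p)).
have [c] := MVT ltr01 (fun s _ => fline s)
  (derivable_within_continuous (fun s _ => @ex_derive _ _ _ _ _ _ _ (fline s))).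
by rewrite in_itv /= scale1r scale0r addr0 subr0 mulr1; exists c.
Qed.

End MeanValueAlongSegment.

Section CauchyStep.
Variables (R : realType) (d : nat).

Lemma tr_model_decrease (g : 'rV[R]_d) (a : R) :
  tr_model g 0 - tr_model g (- (a *: g)) = a * (1 - a / 2) * enorm g ^+ 2.
Proof.
rewrite /tr_model !enorm_sqr dotpC !dotp0l.
by rewrite ?(dotpNl, dotpNr, dotpZl, dotpZr); ring.
Qed.

Variables (g : 'rV[R]_d) (D : R).
Hypotheses (D_gt0 : 0 < D) (g_neq0 : g != 0).

Let e_gt0 : 0 < enorm g. Proof. by rewrite enorm_gt0. Qed.

Lemma tr_alpha_gt0 : 0 < tr_alpha g D.
Proof. by rewrite /tr_alpha; case: ifP => // _; rewrite divr_gt0. Qed.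

Lemma tr_alpha_le1 : tr_alpha g D <= 1.
Proof.
rewrite /tr_alpha; case: ifPn => // /negbTE gD.
by rewrite ler_pdivrMr // mul1r ltW // ltNge gD.
Qed.

Lemma tr_alpha_le_ratio : tr_alpha g D <= D / enorm g.
Proof. by rewrite /tr_alpha; case: ifP => // gD; rewrite ler_pdivlMr // mul1r. Qed.

Lemma mul_tr_alpha_le (K M r : R) : 0 <= K <= M -> 0 < r ->
  D <= enorm g / (r * M) -> K * tr_alpha g D <= r^-1.
Proof.
move=> /andP[K0 KM] r0 DM.
have M0 : 0 < M.
  rewrite lt_neqAle (le_trans K0 KM) andbT.
  by apply: contraTneq DM => <-; rewrite mulr0 invr0 mulr0 -ltNge.
apply: (@le_trans _ _ (M * (D / enorm g))).
  by apply: ler_pM => //; [exact/ltW/tr_alpha_gt0 | exact: tr_alpha_le_ratio].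
have DrM : D * (r * M) <= enorm g by rewrite -ler_pdivlMr ?mulr_gt0.
by rewrite mulrA ler_pdivrMr // mulrC ler_pdivlMl // mulrCA.
Qed.

End CauchyStep.

Section GradientStep.
Variables (R : realType) (d : nat) (f : 'rV[R]_d -> R).
Variables (grad : 'rV[R]_d -> 'rV[R]_d) (L : R).
Hypotheses (f_diff : forall x, differentiable f x)
  (f_grad : forall x v, 'D_v f x = dotp (grad x) v) (L_ge0 : 0 <= L)
  (grad_lipschitz : forall x y, enorm (grad x - grad y) <= L * enorm (x - y)).

Lemma gradient_step_decrease x a : 0 <= a ->
  a * (1 - L * a) * enorm (grad x) ^+ 2 <= f x - f (x - a *: grad x).
Proof.
move=> a0; set g := grad x; set e := enorm g.
have [c /andP[c0 c1]] := mean_value_along_segment x (- (a *: g)) f_diff.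
rewrite f_grad -opprB => /eqP; rewrite eqr_oppLR => /eqP ->.
rewrite dotpNr dotpZr opprK.
set y := x + c *: - (a *: g).
have lip : enorm (grad y - g) <= L * (c * a * e).
  have := grad_lipschitz y x.
  rewrite /y addrAC subrr add0r enormZ enormN enormZ.
  by rewrite (ger0_norm (ltW c0)) (ger0_norm a0) mulrA.
have split_g : dotp (grad y) g = dotp (grad y - g) g + e ^+ 2.
  by rewrite /e enorm_sqr -dotpDl subrK.
have cs := dotp_ge_Nenorm (grad y - g) g.
rewrite split_g -mulrA ler_wpM2l //.
have e0 : 0 <= e := enorm_ge0 g.
have : enorm (grad y - g) * e <= L * (c * a * e) * e by rewrite ler_wpM2r.
have Lae : 0 <= L * a * e ^+ 2 by rewrite !mulr_ge0 // sqr_ge0.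
have c1' : 0 <= 1 - c by rewrite subr_ge0 ltW.
have := mulr_ge0 Lae c1'.
rewrite -/e in cs; nra.
Qed.

Lemma tr_ratio_ge x D : 0 < D -> grad x != 0 -> L * tr_alpha (grad x) D <= 1 ->
  1 - L * tr_alpha (grad x) D <= tr_ratio f (grad x) x D.
Proof.
move=> D0 g0; set a := tr_alpha _ _ => La1.
have a0 : 0 < a := tr_alpha_gt0 D0 g0.
have a1 : a <= 1 := tr_alpha_le1 D g0.
have e2 : 0 < enorm (grad x) ^+ 2 by rewrite exprn_gt0 // enorm_gt0.
rewrite /tr_ratio /tr_step tr_model_decrease -/a ler_pdivlMr; last first.
  by rewrite mulr_gt0 // mulr_gt0 //; lra.
apply: le_trans (gradient_step_decrease x (ltW a0)).
have : 0 <= a * (1 - L * a) * enorm (grad x) ^+ 2.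
  by rewrite mulr_ge0 ?(ltW e2) // mulr_ge0 ?(ltW a0) // subr_ge0.
nra.
Qed.

End GradientStep.

Section TrustRegionRadius.
Variables (R : realType) (d : nat) (Dbar c0 c1 c2 nu1 nu2 : R).

Lemma tr_update_radius_expand (fi : 'rV[R]_d -> R) gradi x D : c1 <= c2 ->
  c2 < tr_ratio fi (gradi x) x D ->
  (tr_update Dbar c0 c1 c2 nu1 nu2 fi gradi (x, D)).2 = Num.min (nu2 * D) Dbar.
Proof.
move=> c12 c2r /=; rewrite ifF ?c2r //.
by apply/negbTE; rewrite -leNgt (le_trans c12) // ltW.
Qed.

Hypotheses (Dbar_gt0 : 0 < Dbar) (nu1_gt1 : 1 < nu1) (nu2_gt1 : 1 < nu2).

Lemma tr_update_radius_gt0 (fi : 'rV[R]_d -> R) gradi x D : 0 < D ->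
  0 < (tr_update Dbar c0 c1 c2 nu1 nu2 fi gradi (x, D)).2.
Proof.
move=> D_gt0 /=; case: ifP => _; first by rewrite divr_gt0 // (lt_trans ltr01).
case: ifP => // _; rewrite lt_min Dbar_gt0 andbT mulr_gt0 // (lt_trans ltr01) //.
Qed.

Lemma tr_iter_radius_gt0 n (F : 'I_n -> 'rV[R]_d -> R) grad idx x0 D0 k :
  0 < D0 -> 0 < (tr_iter F grad Dbar c0 c1 c2 nu1 nu2 idx x0 D0 k).2.
Proof.
move=> D0_gt0; elim: k => //= k.
by case: (tr_iter _ _ _ _ _ _ _ _ _ _ _ k) => x D; apply: tr_update_radius_gt0.
Qed.

End TrustRegionRadius.

Theorem lemma4p4 (R : realType) (d n : nat)
  (F : 'I_n -> 'rV[R]_d -> R) (grad : 'I_n -> 'rV[R]_d -> 'rV[R]_d)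
  (L : 'I_n -> R)
  (hdiff : forall i x, differentiable (F i) x)
  (hgrad : forall i x v, 'D_v (F i) x = dotp (grad i x) v)
  (hL0 : forall i, 0 <= L i)
  (hLip : forall i x y, enorm (grad i x - grad i y) <= L i * enorm (x - y))
  (Dbar D0 c0 c1 c2 nu1 nu2 : R)
  (hDbar : 0 < Dbar) (hD0 : 0 < D0) (hD0' : D0 < Dbar)
  (hc0 : 0 < c0) (hc01 : c0 <= c1) (hc12 : c1 <= c2) (hc2 : c2 < 1)
  (hnu1 : 1 < nu1) (hnu2 : 1 < nu2)
  (idx : nat -> 'I_n) (x0 : 'rV[R]_d) (k : nat) :
  let M := \big[Num.max/0]_(j < n) L j in
  let r := 2 / (1 - c2) in
  let st := tr_iter F grad Dbar c0 c1 c2 nu1 nu2 idx x0 D0 k in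
  let gk := grad (idx k) st.1 in
  gk != 0 ->
  st.2 <= enorm gk / (r * M) ->
  (tr_iter F grad Dbar c0 c1 c2 nu1 nu2 idx x0 D0 k.+1).2
    = Num.min (nu2 * st.2) Dbar.
Proof.
move=> M r st gk; rewrite /gk /st /=.
have : 0 < (tr_iter F grad Dbar c0 c1 c2 nu1 nu2 idx x0 D0 k).2.
  exact: tr_iter_radius_gt0.
case: (tr_iter _ _ _ _ _ _ _ _ _ _ _ k) => x D /= D_gt0 g_neq0 small_radius.
set i := idx k in g_neq0 small_radius *.
apply: tr_update_radius_expand => //.
have r_gt0 : 0 < r by rewrite divr_gt0 // subr_gt0.
have LM : 0 <= L i <= M by rewrite hL0 le_bigmax.
have := mul_tr_alpha_le D_gt0 g_neq0 LM r_gt0 small_radius.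
rewrite invf_div => La.
apply: lt_le_trans (tr_ratio_ge (hdiff i) (hgrad i) (hL0 i) (hLip i) D_gt0 g_neq0 _).
all: lra.
Qed.
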